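(* Let $M,T\ge1$, $\mathcal B=\{B_1<\dots<B_{|\mathcal B|}\}\subset[0,1]$ finite, $\bm v\in[0,1]^M$ with $v_1\ge\dots\ge v_M$, and fix competing bid vectors $\bm b^t_-$, $t\in[T]$. Let $\pi^1,\dots,\pi^T$ be policies (as defined in the context) and let $\bm q^t=q(\pi^t)$ be their node probability measures, and suppose in round $t$ the agent draws $\bm b^t$ according to $\pi^t$. Then $$\textsc{Regret}_{\mathcal B}=\max_{\bm q\in\mathcal Q}\sum_{t=1}^T\langle\bm q-\bm q^t,\bm w^t\rangle,$$ where $\bm w^t=(w^t_m(b))_{m\in[M],b\in\mathcal B}$ and $\langle\bm x,\bm y\rangle=\sum_{m\in[M]}\sum_{b\in\mathcal B}x_m(b)y_m(b)$.
   Context: $w^t_m(b)=(v_m-b)\mathbf 1_{b\ge b^t_{-m}}$ and $\mu^t(\bm b)=\sum_m w^t_m(b_m)$ is the agent's pay-as-bid utility in round $t$, where $\bm b^t_-=(b^t_{-1}\le\dots\le b^t_{-\overline M})$, $\overline M\ge M$. $\mathcal B^{+M}$ is the set of non-increasing $M$-vectors with entries in $\mathcal B$, and $\textsc{Regret}_{\mathcal B}=\max_{\bm b\in\mathcal B^{+M},\,b_m\le v_m\forall m}\sum_t\mu^t(\bm b)-\mathbb E[\sum_t\mu^t(\bm b^t)]$. With $b_0=\max\mathcal B$, a policy is $\pi\in[0,1]^{\{0,\dots,M-1\}\times\mathcal B\times\mathcal B}$ with $\pi((m,b),b')=0$ for $b'>b$ and $\sum_{b'\le b}\pi((m,b),b')=1$;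 bids are drawn as $b_1\sim\pi((0,b_0),\cdot)$, $b_{m+1}\sim\pi((m,b_m),\cdot)$. Its node measure $q(\pi)$ is $q_1(b)=\pi((0,b_0),b)$, $q_{m+1}(b)=\sum_{b'}q_m(b')\pi((m,b'),b)$. $\mathcal Q=\{\bm q\in[0,1]^{M\times\mathcal B}:\sum_bq_m(b)=1\ \forall m,\ \sum_{b\le b'}q_{m+1}(b)\ge\sum_{b\le b'}q_m(b)\ \forall b'\in\mathcal B,m\in[M-1]\}$. *)

From HB Require Import structures.
From mathcomp Require Import all_boot all_order all_algebra.
From mathcomp Require Import reals.
Set Implicit Arguments. Unset Strict Implicit. Unset Printing Implicit Defensive.
Import Order.TTheory GRing.Theory Num.Theory.
Local Open Scope ring_scope.

Section PayAsBid.
Variables (R : realType) (M K : nat).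

(* w^t_m(b) = (v_m - b) 1_{b >= b^t_{-m}};  bm m = b^t_{-m} *)
Definition w (v bm : 'I_M -> R) (m : 'I_M) (b : R) : R :=
  (v m - b) * (if bm m <= b then 1 else 0).

Definition mu (v bm : 'I_M -> R) (b : 'I_M -> R) : R :=
  \sum_(m : 'I_M) w v bm m (b m).

(* B : 'I_K -> R is the grid B_1 < ... < B_K; bid vectors are index vectors *)
Definition nonincr_bids (B : 'I_K -> R) (idx : 'I_M -> 'I_K) : Prop :=
  forall m1 m2 : 'I_M, (m1 <= m2)%N -> B (idx m2) <= B (idx m1).

(* policy pi : {0..M-1} x B x B -> [0,1]; pi m b b' = pi((m,b),b') *)
Definition is_policy (B : 'I_K -> R) (pi : 'I_M -> 'I_K -> 'I_K -> R) : Prop :=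
  [/\ (forall m b b', 0 <= pi m b b' <= 1),
      (forall m b b', B b < B b' -> pi m b b' = 0) &
      (forall m b, \sum_(b' : 'I_K | B b' <= B b) pi m b b' = 1)].

(* Probability that the policy (starting from node (0,b_0), b_0 = B top)
   draws the bid-index vector idx: b_1 ~ pi((0,b_0),.), b_{m+1} ~ pi((m,b_m),.)
   (0-based: bid j>0 is drawn from pi j (idx (j-1)) .) *)
Definition prob (pi : 'I_M -> 'I_K -> 'I_K -> R) (top : 'I_K)
  (idx : 'I_M -> 'I_K) : R :=
  (\prod_(j : 'I_M | val j == 0%N) pi j top (idx j)) *
  \prod_(i : 'I_M) \prod_(j : 'I_M | val j == (val i).+1) pi j (idx i) (idx j).

Definition expected_mu (B : 'I_K -> R) (pi : 'I_M -> 'I_K -> 'I_K -> R)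
  (top : 'I_K) (v bm : 'I_M -> R) : R :=
  \sum_(idx : {ffun 'I_M -> 'I_K}) prob pi top idx * mu v bm (fun m => B (idx m)).

(* node measure q(pi): q_1(b) = pi((0,b_0),b),
   q_{m+1}(b) = sum_b' q_m(b') pi((m,b'),b)   (0-based in nat) *)
Fixpoint qnode (pi : 'I_M -> 'I_K -> 'I_K -> R) (top : 'I_K) (m : nat)
  (b : 'I_K) {struct m} : R :=
  match m with
  | 0%N => match (insub 0%N : option 'I_M) with
           | Some i => pi i top b | None => 0 end
  | m'.+1 => match (insub m'.+1 : option 'I_M) with
             | Some i => \sum_(b' : 'I_K) qnode pi top m' b' * pi i b' b
             | None => 0 end
  end.

Definition node_measure (pi : 'I_M -> 'I_K -> 'I_K -> R) (top : 'I_K)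
  : 'I_M -> 'I_K -> R := fun m b => qnode pi top (val m) b.

Definition inQ (B : 'I_K -> R) (q : 'I_M -> 'I_K -> R) : Prop :=
  [/\ (forall m b, 0 <= q m b <= 1),
      (forall m, \sum_(b : 'I_K) q m b = 1) &
      (forall m1 m2 : 'I_M, val m2 = (val m1).+1 -> forall b' : 'I_K,
         \sum_(b : 'I_K | B b <= B b') q m1 b <= \sum_(b : 'I_K | B b <= B b') q m2 b)].

Definition wvec (B : 'I_K -> R) (v bm : 'I_M -> R) : 'I_M -> 'I_K -> R :=
  fun m b => w v bm m (B b).

Definition inner (x y : 'I_M -> 'I_K -> R) : R :=
  \sum_(m : 'I_M) \sum_(b : 'I_K) x m b * y m b.

End PayAsBid.

Definition ismax (R : realType) (S : R -> Prop) (r : R) : Prop :=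
  S r /\ forall x, S x -> x <= r.

From HB Require Import structures.
From mathcomp Require Import all_boot all_order all_algebra.
From mathcomp Require Import reals.
From mathcomp Require Import zify.
Import Order.TTheory GRing.Theory Num.Theory.
Local Open Scope ring_scope.
Set Implicit Arguments. Unset Strict Implicit. Unset Printing Implicit Defensive.

(* Put W := sum_t w^t.  The node measure of a policy is the law of the bid it
   places on each slot, so E[mu^t(b^t)] = <q(pi^t), w^t>; both maxima are thus a
   linear value minus the same constant, and it suffices to compare the best
   sum_m W_m(b_m) over feasible bid vectors with the best <q, W> over Q.
   Point masses of feasible bid vectors lie in Q.  Conversely, membership in Q
   says that q_(m+1) is stochastically dominated by q_m.  The value to go V_m(b),
   the best value of slots m, m+1, ... over non-increasing bids at most b, is
   non-decreasing in b and satisfies W_m(b) + V_(m+1)(b) <= V_m(b); dominance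
   gives E_(q_(m+1)) V_(m+1) <= E_(q_m) V_(m+1), and telescoping bounds <q, W> by
   the value of a non-increasing bid vector.  Clipping each of its bids to the
   largest grid point below v_m keeps it non-increasing, as v is, and loses no
   value, because w^t_m(b) <= 0 whenever b > v_m. *)

Section MarkovChain.
Variables (R : comPzSemiRingType) (J : finType) (p : nat -> J -> J -> R) (s0 : J).
Hypothesis p_stochastic : forall i x, \sum_y p i x y = 1.

Definition snoc_path N (g : {ffun 'I_N -> J}) (x : J) : {ffun 'I_N.+1 -> J} :=
  [ffun i => if unlift ord_max i is Some j then g j else x].

Lemma snoc_path_max N (g : {ffun 'I_N -> J}) x : snoc_path g x ord_max = x.
Proof. by rewrite ffunE unlift_none. Qed.

Lemma snoc_path_lift N (g : {ffun 'I_N -> J}) x j :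
  snoc_path g x (lift ord_max j) = g j.
Proof. by rewrite ffunE liftK. Qed.

Lemma big_snoc_path N (F : {ffun 'I_N.+1 -> J} -> R) :
  \sum_f F f = \sum_(g : {ffun 'I_N -> J}) \sum_x F (snoc_path g x).
Proof.
rewrite pair_big (reindex (fun gx => snoc_path gx.1 gx.2)) //=.
exists (fun f => ([ffun j => f (lift ord_max j)], f ord_max)) => [[g x] _|f _].
  by rewrite snoc_path_max; congr pair; apply/ffunP => j; rewrite ffunE snoc_path_lift.
by apply/ffunP => i; rewrite ffunE; case: unliftP => [j ->|->]; rewrite ?ffunE.
Qed.

Definition path_prob N (f : {ffun 'I_N.+1 -> J}) : R :=
  \prod_(i < N.+1) p i (if val i is i'.+1 then f (inord i') else s0) (f i).

Fixpoint marginal (m : nat) (y : J) : R :=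
  if m is m'.+1 then \sum_x marginal m' x * p m x y else p 0 s0 y.

Lemma snoc_path_inord N (g : {ffun 'I_N.+1 -> J}) x j :
  (j <= N)%N -> snoc_path g x (inord j) = g (inord j).
Proof.
move=> lejN; rewrite -(snoc_path_lift g x); congr (snoc_path g x _).
by apply: val_inj; rewrite /= /bump leqNgt !inordK ?ltnS ?lejN // ltnW.
Qed.

Lemma path_prob_snoc N (g : {ffun 'I_N.+1 -> J}) x :
  path_prob (snoc_path g x) = path_prob g * p N.+1 (g ord_max) x.
Proof.
rewrite /path_prob big_ord_recr /= snoc_path_max snoc_path_inord //.
congr (_ * p _ (g _) _); last by apply: val_inj; rewrite /= inordK.
apply: eq_bigr => i _.
have -> : widen_ord (leqnSn N.+1) i = lift ord_max i.
  by apply: val_inj; rewrite /= /bump leqNgt ltn_ord.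
rewrite snoc_path_lift; case: i => [[|i] //= ltiN].
by rewrite snoc_path_inord // ltnW.
Qed.

Lemma path_prob_marginal N (m : 'I_N.+1) (h : J -> R) :
  \sum_f path_prob f * h (f m) = \sum_y marginal m y * h y.
Proof.
elim: N m h => [|N IH] m h.
  have -> : m = ord_max by apply: val_inj; case: m => [[]].
  rewrite big_snoc_path (eq_bigr (fun=> \sum_y p 0 s0 y * h y)).
    by rewrite sumr_const card_ffun card_ord expn0 mulr1n.
  move=> g _; apply: eq_bigr => y _.
  by rewrite /path_prob big_ord_recr big_ord0 /= mul1r snoc_path_max.
rewrite big_snoc_path; case: (unliftP ord_max m) => [j ->|->].
  have -> : nat_of_ord (lift ord_max j) = j by rewrite /= /bump leqNgt ltn_ord.
  rewrite -IH; apply: eq_bigr => g _.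
  under eq_bigr do rewrite path_prob_snoc snoc_path_lift mulrAC.
  by rewrite -mulr_sumr p_stochastic mulr1.
under eq_bigr do under eq_bigr do rewrite path_prob_snoc snoc_path_max -mulrA.
under eq_bigr do rewrite -mulr_sumr.
rewrite (IH ord_max (fun x => \sum_y p N.+1 x y * h y)) /=.
under [RHS]eq_bigr do rewrite mulr_suml.
rewrite exchange_big; apply: eq_bigr => x _; rewrite mulr_sumr.
by apply: eq_bigr => y _; rewrite mulrA.
Qed.

End MarkovChain.

Section StochasticDominance.
Variables (R : numDomainType) (k : nat).

Definition cdf (q : 'I_k.+1 -> R) (c : nat) : R := \sum_(b : 'I_k.+1 | (b <= c)%N) q b.

Lemma sum_mul_layer_cake (q h : 'I_k.+1 -> R) :
  \sum_b q b * h b =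
  (\sum_b q b) * h ord_max - \sum_(c < k) cdf q c * (h (inord c.+1) - h (inord c)).
Proof.
have tel b : h b = h ord_max - \sum_(c < k | (b <= c)%N) (h (inord c.+1) - h (inord c)).
  have -> : \sum_(c < k | (b <= c)%N) (h (inord c.+1) - h (inord c)) =
            \sum_(b <= c < k) (h (inord c.+1) - h (inord c)) by rewrite big_geq_mkord.
  rewrite (telescope_sumr (fun c => h (inord c))) -1?ltnS // inord_val.
  rewrite (_ : inord k = ord_max); last by apply: val_inj; rewrite /= inordK.
  by rewrite opprB addrC subrK.
under eq_bigr do rewrite tel mulrBr mulr_sumr.
rewrite sumrB -mulr_suml; congr (_ - _).
rewrite (exchange_big_dep xpredT) //=; apply: eq_bigr => c _.
by rewrite /cdf mulr_suml.
Qed.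

Lemma dominated_sum_mul_le (q1 q2 h : 'I_k.+1 -> R) :
  \sum_b q1 b = \sum_b q2 b ->
  (forall c : 'I_k.+1, cdf q1 c <= cdf q2 c) ->
  {homo h : b c / (b <= c)%N >-> b <= c} ->
  \sum_b q2 b * h b <= \sum_b q1 b * h b.
Proof.
move=> sum_q cdf_le h_mono; rewrite !sum_mul_layer_cake sum_q lerD2l lerN2.
apply: ler_sum => c _; apply: ler_wpM2r; last exact: (cdf_le (widen_ord (leqnSn k) c)).
by rewrite subr_ge0; apply: h_mono; rewrite !inordK // ltnS // ltnW.
Qed.

End StochasticDominance.

Section MonotonePaths.
Variables (R : realDomainType) (n k : nat) (W : 'I_n.+1 -> 'I_k.+1 -> R).
Local Notation path := {ffun 'I_n.+1 -> 'I_k.+1}.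
Implicit Types (m : nat) (b c : 'I_k.+1) (g : path).

Definition tail_admissible (m : nat) (b : 'I_k.+1) (g : path) : bool :=
  [forall i : 'I_n.+1, forall j : 'I_n.+1, (m <= i <= j)%N ==> (g j <= g i <= b)%N].

Lemma tail_admissibleP m b g :
  reflect (forall i j : 'I_n.+1, (m <= i <= j)%N -> (g j <= g i <= b)%N)
          (tail_admissible m b g).
Proof.
apply: (iffP forallP) => [adm i j|adm i]; first exact: (implyP (forallP (adm i) j)).
by apply/forallP => j; apply/implyP/adm.
Qed.

Definition tail_value (m : nat) (g : path) : R :=
  \sum_(j : 'I_n.+1 | (m <= j)%N) W j (g j).

Definition best_tail (m : nat) (b : 'I_k.+1) : path :=
  Order.arg_max [ffun=> ord0] (tail_admissible m b) (tail_value m).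

Definition value_to_go (m : nat) (b : 'I_k.+1) : R := tail_value m (best_tail m b).

Lemma zero_path_admissible m b : tail_admissible m b [ffun=> ord0].
Proof. by apply/tail_admissibleP => i j _; rewrite !ffunE. Qed.

Lemma best_tail_admissible m b : tail_admissible m b (best_tail m b).
Proof. by rewrite /best_tail; case: (arg_maxP (tail_value m) (zero_path_admissible m b)). Qed.

Lemma tail_value_le_value_to_go m b g :
  tail_admissible m b g -> tail_value m g <= value_to_go m b.
Proof.
rewrite /value_to_go /best_tail.
by case: (arg_maxP (tail_value m) (zero_path_admissible m b)) => g0 _ g0_max /g0_max.
Qed.

Lemma value_to_go_mono m : {homo value_to_go m : b c / (b <= c)%N >-> b <= c}.
Proof.
move=> b c le_bc; apply: tail_value_le_value_to_go.
apply/tail_admissibleP => i j /(tail_admissibleP _ _ _ (best_tail_admissible m b) i j).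
by case/andP=> -> /leq_trans->.
Qed.

Lemma value_to_go_out b : value_to_go n.+1 b = 0.
Proof. by rewrite /value_to_go /tail_value big_pred0 // => j; rewrite leqNgt ltn_ord. Qed.

Lemma value_to_go_step (m : 'I_n.+1) b : W m b + value_to_go m.+1 b <= value_to_go m b.
Proof.
have /tail_admissibleP g_adm := best_tail_admissible m.+1 b.
set g := best_tail m.+1 b in g_adm *.
pose g' : path := [ffun j : 'I_n.+1 => if (j <= m)%N then b else g j].
have g'_adm : tail_admissible m b g'.
  apply/tail_admissibleP => i j /andP[le_mi le_ij]; rewrite !ffunE.
  case: (leqP j m) => [le_jm|lt_mj]; first by rewrite (leq_trans le_ij le_jm) leqnn.
  case: (leqP i m) => [_|lt_mi]; last by apply: g_adm; rewrite lt_mi.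
  by have := g_adm j j; rewrite lt_mj !leqnn => /(_ isT) /andP[_ ->].
have -> : W m b + value_to_go m.+1 b = tail_value m g'.
  rewrite /tail_value (bigD1 m) //= ffunE leqnn; congr (_ + _).
  apply: eq_big => [j|j lt_mj]; first by rewrite ltn_neqAle andbC eq_sym.
  by rewrite ffunE leqNgt lt_mj.
exact: tail_value_le_value_to_go.
Qed.

Variable q : 'I_n.+1 -> 'I_k.+1 -> R.
Hypothesis q_ge0 : forall (m : 'I_n.+1) b, 0 <= q m b.
Hypothesis q_sum1 : forall m : 'I_n.+1, \sum_b q m b = 1.
Hypothesis q_cdf : forall m1 m2 : 'I_n.+1, val m2 = (val m1).+1 ->
  forall c : 'I_k.+1, cdf (q m1) c <= cdf (q m2) c.

Lemma expected_value_le_value_to_go :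
  \sum_(m : 'I_n.+1) \sum_b q m b * W m b <= value_to_go 0 ord_max.
Proof.
pose E i := \sum_b q (inord i) b * value_to_go i b.
have E_out : E n.+1 = 0 by rewrite /E big1 // => b _; rewrite value_to_go_out mulr0.
have E_succ (m : 'I_n.+1) : E m.+1 <= \sum_b q m b * value_to_go m.+1 b.
  have [lt_mn|le_nm] := ltnP m n; last first.
    have -> : m.+1 = n.+1 by apply/eqP; rewrite eqSS eqn_leq le_nm andbT -ltnS.
    by rewrite E_out big1 // => b _; rewrite value_to_go_out mulr0.
  apply: dominated_sum_mul_le; [by rewrite !q_sum1 | | exact: value_to_go_mono].
  by apply: q_cdf; rewrite /= inordK.
have step (m : 'I_n.+1) : \sum_b q m b * W m b <= E m - E m.+1.
  apply: le_trans (lerB (lexx _) (E_succ m)); rewrite /E inord_val -sumrB.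
  apply: ler_sum => b _; rewrite -mulrBr ler_wpM2l // lerBrDr.
  exact: value_to_go_step.
apply: le_trans (_ : _ <= \sum_(m < n.+1) (E m - E m.+1)) _.
  by apply: ler_sum => m _; exact: step.
rewrite -(big_mkord xpredT (fun m => E m - E m.+1)).
rewrite (telescope_sumr_eq (fun i => - E i)) // => [|i _]; last by rewrite opprK addrC.
rewrite E_out oppr0 add0r opprK /E.
apply: le_trans (_ : \sum_b q (inord 0) b * value_to_go 0 ord_max <= _).
  by apply: ler_sum => b _; rewrite ler_wpM2l ?value_to_go_mono // -ltnS.
by rewrite -mulr_suml q_sum1 mul1r.
Qed.

Lemma expected_value_le_monotone_path :
  exists2 g : path, (forall i j : 'I_n.+1, (i <= j)%N -> (g j <= g i)%N) &
    \sum_(m : 'I_n.+1) \sum_b q m b * W m b <= \sum_(m : 'I_n.+1) W m (g m).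
Proof.
exists (best_tail 0 ord_max).
  move=> i j le_ij.
  by have /tail_admissibleP/(_ i j le_ij)/andP[] := best_tail_admissible 0 ord_max.
apply: le_trans expected_value_le_value_to_go _.
by rewrite /value_to_go /tail_value; under eq_bigl do rewrite leq0n.
Qed.

End MonotonePaths.

Lemma sumr_delta (R : pzSemiRingType) (J : finType) (a : J) (P : pred J) :
  \sum_(b | P b) ((a == b)%:R : R) = (P a)%:R.
Proof.
rewrite big_mkcond (bigD1 a) //= eqxx big1 ?addr0; first by case: (P a).
by move=> b; rewrite eq_sym => /negbTE->; case: (P b).
Qed.

Section PayAsBid.
Variables (R : realType) (n k : nat) (B : 'I_k.+1 -> R) (v : 'I_n.+1 -> R).
Local Notation path := {ffun 'I_n.+1 -> 'I_k.+1}.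
Local Notation policy := ('I_n.+1 -> 'I_k.+1 -> 'I_k.+1 -> R).
Implicit Types (m : 'I_n.+1) (idx g : path) (W q : 'I_n.+1 -> 'I_k.+1 -> R).

Lemma w_ge0 (bm : 'I_n.+1 -> R) m x : x <= v m -> 0 <= w v bm m x.
Proof. by move=> le_xv; rewrite /w; case: ifP; rewrite ?mulr1 ?mulr0 // subr_ge0. Qed.

Lemma w_le0 (bm : 'I_n.+1 -> R) m x : v m <= x -> w v bm m x <= 0.
Proof. by move=> le_vx; rewrite /w; case: ifP; rewrite ?mulr1 ?mulr0 // subr_le0. Qed.

Lemma sum_wvec_above_le T (bm : 'I_T -> 'I_n.+1 -> R) m b c :
  B c <= v m < B b -> \sum_t wvec B v (bm t) m b <= \sum_t wvec B v (bm t) m c.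
Proof.
case/andP=> le_cv lt_vb; apply: ler_sum => t _.
exact: le_trans (w_le0 _ (ltW lt_vb)) (w_ge0 _ le_cv).
Qed.

Lemma policy_stochastic (pi : policy) :
  is_policy B pi -> forall m b, \sum_b' pi m b b' = 1.
Proof.
case=> _ pi_above pi_sum1 m b; rewrite (bigID (fun b' => B b' <= B b)) /= pi_sum1.
by rewrite big1 ?addr0 // => b'; rewrite -ltNge => /pi_above.
Qed.

Lemma prob_path_prob (pi : policy) top idx :
  prob pi top idx = path_prob (fun i => pi (inord i)) top idx.
Proof.
rewrite /prob /path_prob [RHS]big_ord_recl (big_pred1 ord0) // big_ord_recr /=.
rewrite [X in _ * (_ * X)]big_pred0 => [|j]; last by apply/negbTE; rewrite neq_ltn ltn_ord.
rewrite mulr1; congr (pi _ _ _ * _); first by apply: val_inj; rewrite /= inordK.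
apply: eq_bigr => i _; rewrite (big_pred1 (lift ord0 i)) => [|j]; last first.
  by rewrite /= -val_eqE.
rewrite /bump /= add1n add0n.
by congr (pi _ (idx _) _); apply: val_inj; rewrite /= inordK // ltnS // ltnW.
Qed.

Lemma node_measure_marginal (pi : policy) top m b :
  node_measure pi top m b = marginal (fun i => pi (inord i)) top m b.
Proof.
have insub_inord i (lt_in : (i < n.+1)%N) : insub i = Some (inord i : 'I_n.+1).
  by rewrite /inord /insubd; case: insubP => //; rewrite lt_in.
case: m => m /= lt_mn; rewrite /node_measure /=.
elim: m lt_mn b => [|m IH] lt_mn b /=; rewrite insub_inord //.
by apply: eq_bigr => b' _; rewrite IH // ltnW.
Qed.

Lemma expected_mu_node_measure (pi : policy) top (bm : 'I_n.+1 -> R) :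
  is_policy B pi -> expected_mu B pi top v bm = inner (node_measure pi top) (wvec B v bm).
Proof.
move=> /policy_stochastic pi_stoch.
have p_stoch i b : \sum_b' pi (inord i) b b' = 1 := pi_stoch (inord i) b.
rewrite /expected_mu /inner; under eq_bigr do rewrite prob_path_prob /mu mulr_sumr.
rewrite exchange_big; apply: eq_bigr => m _.
rewrite (path_prob_marginal top p_stoch m (fun b => wvec B v bm m b)).
by apply: eq_bigr => b _; rewrite node_measure_marginal.
Qed.

Lemma sum_inner_sub_node_measure T (pi : 'I_T -> policy) top
    (bm : 'I_T -> 'I_n.+1 -> R) q :
  (forall t, is_policy B (pi t)) ->
  \sum_t inner (fun m b => q m b - node_measure (pi t) top m b) (wvec B v (bm t)) =
  inner q (fun m b => \sum_t wvec B v (bm t) m b) - \sum_t expected_mu B (pi t) top v (bm t).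
Proof.
move=> pi_policy; under [X in _ - X]eq_bigr => t _ do rewrite expected_mu_node_measure //.
have -> : inner q (fun m b => \sum_t wvec B v (bm t) m b) = \sum_t inner q (wvec B v (bm t)).
  rewrite /inner; under eq_bigr do under eq_bigr do rewrite mulr_sumr.
  by under eq_bigr do rewrite exchange_big; rewrite exchange_big.
rewrite -sumrB; apply: eq_bigr => t _; rewrite /inner -sumrB; apply: eq_bigr => m _.
by rewrite -sumrB; apply: eq_bigr => b _; rewrite mulrBl.
Qed.

Lemma inQ_delta idx :
  nonincr_bids B idx -> inQ B (fun m b => (idx m == b)%:R).
Proof.
move=> idx_nonincr; split=> [m b|m|m1 m2 succ_m c]; first by rewrite ler0n lern1 leq_b1.
  by rewrite sumr_delta.
rewrite !sumr_delta ler_nat; case: (boolP (B (idx m1) <= B c)) => // le_c.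
by rewrite (le_trans (idx_nonincr m1 m2 _) le_c) // succ_m.
Qed.

Lemma inner_delta idx W :
  inner (fun m b => (idx m == b)%:R) W = \sum_m W m (idx m).
Proof.
apply: eq_bigr => m _; rewrite (bigD1 (idx m)) //= eqxx mul1r big1 ?addr0 // => b.
by rewrite eq_sym => /negbTE->; rewrite mul0r.
Qed.

Definition feasible (idx : path) : bool :=
  [forall m1 : 'I_n.+1, forall m2 : 'I_n.+1, (m1 <= m2)%N ==> (B (idx m2) <= B (idx m1))] &&
  [forall m, B (idx m) <= v m].

Lemma feasibleP idx :
  reflect (nonincr_bids B idx /\ forall m, B (idx m) <= v m) (feasible idx).
Proof.
apply: (iffP andP) => [[/forallP idx_nonincr /forallP]|[idx_nonincr le_v]].
  by split=> // m1 m2; apply/implyP/(forallP (idx_nonincr m1)).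
by split; apply/forallP => // m1; apply/forallP => m2; apply/implyP/idx_nonincr.
Qed.

Hypothesis B_incr : forall i j : 'I_k.+1, (i < j)%N -> B i < B j.

Lemma le_B i j : (B i <= B j) = (i <= j)%N.
Proof. exact: (le_mono B_incr). Qed.

Lemma inner_inQ_le_monotone_path W q :
  inQ B q -> exists2 g : path, (forall i j : 'I_n.+1, (i <= j)%N -> (g j <= g i)%N) &
    inner q W <= \sum_m W m (g m).
Proof.
case=> q01 q_sum1 q_dom; apply: expected_value_le_monotone_path => // [m b|m1 m2 succ_m c].
  by case/andP: (q01 m b).
by rewrite /cdf -!(eq_bigl _ _ (le_B ^~ c)); apply: q_dom.
Qed.

Hypothesis v_nonincr : forall m1 m2 : 'I_n.+1, (m1 <= m2)%N -> v m2 <= v m1.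
Variable c0 : 'I_n.+1 -> 'I_k.+1.
Hypothesis c0_le_v : forall m, B (c0 m) <= v m.

Definition cap m : 'I_k.+1 := [arg max_(c > c0 m | B c <= v m) c].

Lemma cap_le_v m : B (cap m) <= v m.
Proof. by rewrite /cap; case: arg_maxnP; first exact: c0_le_v. Qed.

Lemma le_cap m c : B c <= v m -> (c <= cap m)%N.
Proof. by rewrite /cap; case: arg_maxnP => [|c' _ c'_max /c'_max//]; exact: c0_le_v. Qed.

Lemma cap_nonincr m1 m2 : (m1 <= m2)%N -> (cap m2 <= cap m1)%N.
Proof. by move=> le_m; apply/le_cap/(le_trans (cap_le_v m2))/v_nonincr. Qed.

Lemma clip_to_feasible W g :
  (forall m b c, B c <= v m < B b -> W m b <= W m c) ->
  (forall i j : 'I_n.+1, (i <= j)%N -> (g j <= g i)%N) ->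
  exists2 g' : path, feasible g' & \sum_m W m (g m) <= \sum_m W m (g' m).
Proof.
move=> W_clip g_nonincr.
exists [ffun m => if (g m <= cap m)%N then g m else cap m].
  apply/feasibleP; split=> [m1 m2 le_m|m]; rewrite !ffunE.
    have := g_nonincr _ _ le_m; have := cap_nonincr le_m.
    by rewrite le_B; case: ifP; case: ifP; lia.
  by case: ifP => [le_gc|_]; rewrite ?cap_le_v // (le_trans _ (cap_le_v m)) ?le_B.
apply: ler_sum => m _; rewrite ffunE; case: ifPn => // /negP lt_cg.
by apply: W_clip; rewrite cap_le_v ltNge; apply/negP => /le_cap.
Qed.

End PayAsBid.

Theorem lemma2 (R : realType) (M T k Mbar : nat)
  (hM : (0 < M)%N) (hT : (0 < T)%N) (hMbar : (M <= Mbar)%N)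
  (B : 'I_k.+1 -> R)
  (hB01 : forall i, 0 <= B i <= 1)
  (hBinc : forall i j : 'I_k.+1, (i < j)%N -> B i < B j)
  (v : 'I_M -> R)
  (hv01 : forall m, 0 <= v m <= 1)
  (hvdec : forall m1 m2 : 'I_M, (m1 <= m2)%N -> v m2 <= v m1)
  (bminus : 'I_T -> 'I_Mbar -> R)
  (hbminus : forall t (i j : 'I_Mbar), (i <= j)%N -> bminus t i <= bminus t j)
  (pi : 'I_T -> 'I_M -> 'I_k.+1 -> 'I_k.+1 -> R)
  (hpi : forall t, is_policy B (pi t))
  (hfeas : exists idx : {ffun 'I_M -> 'I_k.+1},
             nonincr_bids B idx /\ forall m, B (idx m) <= v m) :
  let bm := fun (t : 'I_T) (m : 'I_M) => bminus t (widen_ord hMbar m) in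
  let regret_set := fun x : R =>
    exists idx : {ffun 'I_M -> 'I_k.+1},
      [/\ nonincr_bids B idx, (forall m, B (idx m) <= v m) &
          x = \sum_(t : 'I_T) mu v (bm t) (fun m => B (idx m))
              - \sum_(t : 'I_T) expected_mu B (pi t) ord_max v (bm t)] in
  let q_set := fun x : R =>
    exists q : 'I_M -> 'I_k.+1 -> R,
      inQ B q /\
      x = \sum_(t : 'I_T)
            inner (fun m b => q m b - node_measure (pi t) ord_max m b)
                  (wvec B v (bm t)) in
  exists r : R, ismax regret_set r /\ ismax q_set r.
Proof.
case: M => [//|n] in hM hMbar v hv01 hvdec pi hpi hfeas * => bm regret_set q_set.
pose W m b := \sum_t wvec B v (bm t) m b.
pose C := \sum_t expected_mu B (pi t) ord_max v (bm t).
have mu_sum idx : \sum_t mu v (bm t) (fun m => B (idx m)) = \sum_m W m (idx m).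
  exact: exchange_big.
have [i0 [i0_nonincr i0_le_v]] := hfeas.
have i0_feas : feasible B v i0 by apply/feasibleP.
case: (arg_maxP (fun idx : {ffun _} => \sum_m W m (idx m)) i0_feas) => ib ib_feas ib_max.
exists (\sum_m W m (ib m) - C); split; split.
- by case/feasibleP: ib_feas => ib_nonincr ib_le_v; exists ib; rewrite mu_sum.
- move=> _ [idx [idx_nonincr idx_le_v ->]]; rewrite mu_sum lerD2r.
  exact/ib_max/feasibleP.
- exists (fun m b => (ib m == b)%:R); case/feasibleP: ib_feas => ib_nonincr _.
  by rewrite sum_inner_sub_node_measure // inner_delta; split; first exact: inQ_delta.
- move=> _ [q [q_in ->]]; rewrite sum_inner_sub_node_measure // lerD2r.
  have [g g_nonincr le_g] := inner_inQ_le_monotone_path hBinc W q_in.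
  have [g' g'_feas le_g'] :=
    clip_to_feasible hBinc hvdec i0_le_v (sum_wvec_above_le bm) g_nonincr.
  exact: le_trans le_g (le_trans le_g' (ib_max _ g'_feas)).
Qed.
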